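(* Let ''free'' mean any one of the following three notions: detection-incoherent, creation-incoherent, or detection-creation-incoherent. If $\Phi$ and $\Theta$ are free quantum operations, then $\Phi\circ\Theta$ (whenever the output of $\Theta$ matches the input of $\Phi$) and $\Phi\otimes\Theta$ are free as well.
   Context: Every finite-dimensional system carries a fixed orthonormal incoherent basis $\{|i\rangle\}$; composite systems use the product basis. The total dephasing map is $\Delta(\rho)=\sum_i|i\rangle\langle i|\rho|i\rangle\langle i|$, and on composite systems it is the tensor product of the dephasing maps of the subsystems. A quantum operation is a completely positive trace-preserving linear map. A quantum operation $\Phi$ is detection-incoherent iff $\Delta\Phi=\Delta\Phi\Delta$, creation-incoherent iff $\Phi\Delta=\Delta\Phi\Delta$, and detection-creation-incoherent iff $\Delta\Phi=\Phi\Delta$. *)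

(* Quantum operations on finite-dimensional systems,
   represented as maps on square matrices over an algebraically closed
   numeric field C (e.g. the complex numbers). *)
From HB Require Import structures.
From mathcomp Require Import all_boot all_order all_algebra.
From mathcomp Require Export mxtens.
Set Implicit Arguments. Unset Strict Implicit. Unset Printing Implicit Defensive.
Import Order.TTheory GRing.Theory Num.Theory.
Local Open Scope ring_scope.

Section QOps.
Variable C : numClosedFieldType.

Definition adjmx m n (A : 'M[C]_(m, n)) : 'M[C]_(n, m) := (map_mx Num.conj A)^T.

Definition psdmx n (A : 'M[C]_n) : Prop :=
  forall v : 'cV[C]_n, 0 <= (adjmx v *m A *m v) 0 0.

(* Tensor product of linear maps on matrices, defined by linear extension
   from the matrix units; composite systems use the product basis
   (the index (i,k) of 'I_(n1*n2) is mxtens_index (i,k), as in A *t B). *)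
Definition tensor_map n1 m1 n2 m2
    (Phi : 'M[C]_n1 -> 'M[C]_m1) (Theta : 'M[C]_n2 -> 'M[C]_m2)
    (X : 'M[C]_(n1 * n2)) : 'M[C]_(m1 * m2) :=
  \sum_(i < n1) \sum_(j < n1) \sum_(k < n2) \sum_(l < n2)
     X (mxtens_index (i, k)) (mxtens_index (j, l))
       *: (Phi (delta_mx i j) *t Theta (delta_mx k l)).

Definition trace_preserving n m (Phi : 'M[C]_n -> 'M[C]_m) : Prop :=
  forall X, \tr (Phi X) = \tr X.

Definition completely_positive n m (Phi : 'M[C]_n -> 'M[C]_m) : Prop :=
  forall (k : nat) (X : 'M[C]_(k * n)),
    psdmx X -> psdmx (tensor_map (@id 'M[C]_k) Phi X).

Definition quantum_operation n m (Phi : 'M[C]_n -> 'M[C]_m) : Prop :=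
  [/\ linear Phi, trace_preserving Phi & completely_positive Phi].

(* total dephasing in the fixed (standard) incoherent basis *)
Definition dephase n (X : 'M[C]_n) : 'M[C]_n :=
  \matrix_(i, j) (if i == j then X i j else 0).

Definition dephase2 n1 n2 : 'M[C]_(n1 * n2) -> 'M[C]_(n1 * n2) :=
  tensor_map (@dephase n1) (@dephase n2).

Definition detection_incoherent n m (Din : 'M[C]_n -> 'M[C]_n)
    (Dout : 'M[C]_m -> 'M[C]_m) (Phi : 'M[C]_n -> 'M[C]_m) : Prop :=
  Dout \o Phi =1 Dout \o Phi \o Din.

Definition creation_incoherent n m (Din : 'M[C]_n -> 'M[C]_n)
    (Dout : 'M[C]_m -> 'M[C]_m) (Phi : 'M[C]_n -> 'M[C]_m) : Prop :=
  Phi \o Din =1 Dout \o Phi \o Din.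

Definition detection_creation_incoherent n m (Din : 'M[C]_n -> 'M[C]_n)
    (Dout : 'M[C]_m -> 'M[C]_m) (Phi : 'M[C]_n -> 'M[C]_m) : Prop :=
  Dout \o Phi =1 Phi \o Din.

End QOps.

Inductive free_kind := DI | CI | DCI.

Definition free_wrt (C : numClosedFieldType) (f : free_kind) n m
    (Din : 'M[C]_n -> 'M[C]_n) (Dout : 'M[C]_m -> 'M[C]_m)
    (Phi : 'M[C]_n -> 'M[C]_m) : Prop :=
  match f with
  | DI => detection_incoherent Din Dout Phi
  | CI => creation_incoherent Din Dout Phi
  | DCI => detection_creation_incoherent Din Dout Phi
  end.

Definition free_op (C : numClosedFieldType) (f : free_kind) n m
    (Phi : 'M[C]_n -> 'M[C]_m) : Prop :=
  quantum_operation Phi /\ free_wrt f (@dephase C n) (@dephase C m) Phi.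

(* Each notion of freeness is a commutation relation with the dephasing maps,
   so it passes to composites by chaining the relations, and to
   tensor products because [tensor_map] is functorial on linear maps:
   (A (x) B) o (A' (x) B') = (A o A') (x) (B o B').  Among the axioms of a
   quantum operation, only complete positivity of Phi (x) Theta needs an
   argument: Phi (x) Theta = (Phi (x) id) o (id (x) Theta), and up to a
   reordering of the tensor factors id_k (x) (id_n (x) Theta) is
   id_(k n) (x) Theta, and id_k (x) (Phi (x) id_n) is id_(k n) (x) Phi.  A
   reordering of indices is a compression X |-> P^T X P by a real matrix P,
   which preserves positive semidefiniteness. *)

From HB Require Import structures.
From mathcomp Require Import all_boot all_order all_algebra.
From mathcomp Require Import mxtens.
Set Implicit Arguments. Unset Strict Implicit. Unset Printing Implicit Defensive.
Import GRing.Theory.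
Local Open Scope ring_scope.

Definition tens_assoc_ord m n p (x : 'I_(m * (n * p))) : 'I_(m * n * p) :=
  let: (a, y) := mxtens_unindex x in let: (i, c) := mxtens_unindex y in
  mxtens_index (mxtens_index (a, i), c).

Definition tens_unassoc_ord m n p (x : 'I_(m * n * p)) : 'I_(m * (n * p)) :=
  let: (y, c) := mxtens_unindex x in let: (a, i) := mxtens_unindex y in
  mxtens_index (a, mxtens_index (i, c)).

Definition tens_swap_ord m n p (x : 'I_(m * (n * p))) : 'I_(m * p * n) :=
  let: (a, y) := mxtens_unindex x in let: (i, c) := mxtens_unindex y in
  mxtens_index (mxtens_index (a, c), i).

Definition tens_unswap_ord m n p (x : 'I_(m * n * p)) : 'I_(m * (p * n)) :=
  let: (y, i) := mxtens_unindex x in let: (a, c) := mxtens_unindex y in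
  mxtens_index (a, mxtens_index (i, c)).

Section TensorProduct.
Variable R : pzRingType.

Lemma delta_mx_tens m n p q (i : 'I_m) (j : 'I_n) (k : 'I_p) (l : 'I_q) :
  delta_mx (mxtens_index (i, k)) (mxtens_index (j, l)) =
  delta_mx i j *t delta_mx k l :> 'M[R]_(m * p, n * q).
Proof.
apply/matrixP => x y.
case: (mxtens_indexP x) => i' k'; case: (mxtens_indexP y) => j' l'.
rewrite tensmxE !mxE !(inj_eq (can_inj (@mxtens_indexK _ _))) !xpair_eqE.
by rewrite -natrM mulnb andbACA.
Qed.

Lemma mxtrace_tens m n (A : 'M[R]_m) (B : 'M[R]_n) : \tr (A *t B) = \tr A * \tr B.
Proof.
rewrite mulr_sum; apply: eq_bigr => x _.
by case: (mxtens_indexP x) => i k; rewrite tensmxE mxtens_indexK.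
Qed.

Lemma linear_mx_coef m n p q (F : {linear 'M[R]_(m, n) -> 'M[R]_(p, q)}) M a b :
  F M a b = \sum_i \sum_j M i j * F (delta_mx i j) a b.
Proof.
rewrite {1}(matrix_sum_delta M) linear_sum summxE; apply: eq_bigr => i _.
by rewrite linear_sum summxE; apply: eq_bigr => j _; rewrite linearZ mxE.
Qed.

Lemma eq_linear_delta (V : zmodType) (s : R -> V -> V) m n
    (F G : {linear 'M[R]_(m, n) -> V | s}) :
  (forall i j, F (delta_mx i j) = G (delta_mx i j)) -> F =1 G.
Proof.
move=> eqFG X; rewrite (matrix_sum_delta X) !linear_sum; apply: eq_bigr => i _.
by rewrite !linear_sum; apply: eq_bigr => j _; rewrite !linearZ_LR eqFG.
Qed.

Lemma eq_linear_tens (V : zmodType) (s : R -> V -> V) m n p q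
    (F G : {linear 'M[R]_(m * p, n * q) -> V | s}) :
  (forall i j k l,
     F (delta_mx i j *t delta_mx k l) = G (delta_mx i j *t delta_mx k l)) ->
  F =1 G.
Proof.
move=> eqFG; apply: eq_linear_delta => x y.
case: (mxtens_indexP x) => i k; case: (mxtens_indexP y) => j l.
by rewrite delta_mx_tens eqFG.
Qed.

Lemma mxsub_tens_assoc m n p (A : 'M[R]_m) (B : 'M[R]_n) (D : 'M[R]_p) :
  mxsub (@tens_assoc_ord m n p) (@tens_assoc_ord m n p) (A *t B *t D) =
  A *t (B *t D).
Proof.
apply/matrixP => x y.
case: (mxtens_indexP x) => a x'; case: (mxtens_indexP x') => i c.
case: (mxtens_indexP y) => b y'; case: (mxtens_indexP y') => j d.
by rewrite mxE /tens_assoc_ord !mxtens_indexK !tensmxE mulrA.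
Qed.

Lemma mxsub_tens_unassoc m n p (A : 'M[R]_m) (B : 'M[R]_n) (D : 'M[R]_p) :
  mxsub (@tens_unassoc_ord m n p) (@tens_unassoc_ord m n p) (A *t (B *t D)) =
  A *t B *t D.
Proof.
apply/matrixP => x y.
case: (mxtens_indexP x) => x' c; case: (mxtens_indexP x') => a i.
case: (mxtens_indexP y) => y' d; case: (mxtens_indexP y') => b j.
by rewrite mxE /tens_unassoc_ord !mxtens_indexK !tensmxE mulrA.
Qed.

End TensorProduct.

Section TensorProductSwap.
Variable R : comPzRingType.

Lemma mxsub_tens_swap m n p (A : 'M[R]_m) (B : 'M[R]_n) (D : 'M[R]_p) :
  mxsub (@tens_swap_ord m n p) (@tens_swap_ord m n p) (A *t D *t B) =
  A *t (B *t D).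
Proof.
apply/matrixP => x y.
case: (mxtens_indexP x) => a x'; case: (mxtens_indexP x') => i c.
case: (mxtens_indexP y) => b y'; case: (mxtens_indexP y') => j d.
by rewrite mxE /tens_swap_ord !mxtens_indexK !tensmxE mulrAC mulrA.
Qed.

Lemma mxsub_tens_unswap m n p (A : 'M[R]_m) (B : 'M[R]_n) (D : 'M[R]_p) :
  mxsub (@tens_unswap_ord m p n) (@tens_unswap_ord m p n) (A *t (B *t D)) =
  A *t D *t B.
Proof.
apply/matrixP => x y.
case: (mxtens_indexP x) => x' i; case: (mxtens_indexP x') => a c.
case: (mxtens_indexP y) => y' j; case: (mxtens_indexP y') => b d.
by rewrite mxE /tens_unswap_ord !mxtens_indexK !tensmxE mulrAC mulrA.
Qed.

End TensorProductSwap.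

Section TensorMap.
Variable C : numClosedFieldType.

Lemma id_linear n : linear (@id 'M[C]_n).
Proof. by []. Qed.

Lemma tensor_map_linear n1 m1 n2 m2
    (Phi : 'M[C]_n1 -> 'M[C]_m1) (Theta : 'M[C]_n2 -> 'M[C]_m2) :
  linear (tensor_map Phi Theta).
Proof.
move=> a X Y; rewrite /tensor_map scaler_sumr -big_split; apply: eq_bigr => i _.
rewrite scaler_sumr -big_split; apply: eq_bigr => j _.
rewrite scaler_sumr -big_split; apply: eq_bigr => k _.
rewrite scaler_sumr -big_split; apply: eq_bigr => l _.
by rewrite !mxE scalerDl scalerA.
Qed.

Lemma eq_tensor_map n1 m1 n2 m2 (Phi Phi' : 'M[C]_n1 -> 'M[C]_m1)
    (Theta Theta' : 'M[C]_n2 -> 'M[C]_m2) :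
  Phi =1 Phi' -> Theta =1 Theta' -> tensor_map Phi Theta =1 tensor_map Phi' Theta'.
Proof.
move=> eqPhi eqTheta X; apply: eq_bigr => i _; apply: eq_bigr => j _.
by apply: eq_bigr => k _; apply: eq_bigr => l _; rewrite eqPhi eqTheta.
Qed.

Lemma tensor_mapE n1 m1 n2 m2
    (Phi : 'M[C]_n1 -> 'M[C]_m1) (Theta : 'M[C]_n2 -> 'M[C]_m2) X p c q d :
  tensor_map Phi Theta X (mxtens_index (p, c)) (mxtens_index (q, d)) =
  \sum_i \sum_j \sum_k \sum_l X (mxtens_index (i, k)) (mxtens_index (j, l)) *
     (Phi (delta_mx i j) p q * Theta (delta_mx k l) c d).
Proof.
rewrite summxE; apply: eq_bigr => i _; rewrite summxE; apply: eq_bigr => j _.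
rewrite summxE; apply: eq_bigr => k _; rewrite summxE; apply: eq_bigr => l _.
by rewrite mxE tensmxE.
Qed.

End TensorMap.

HB.instance Definition _ (C : numClosedFieldType) n1 m1 n2 m2
    (Phi : 'M[C]_n1 -> 'M[C]_m1) (Theta : 'M[C]_n2 -> 'M[C]_m2) :=
  GRing.isLinear.Build C _ _ _ (tensor_map Phi Theta) (tensor_map_linear Phi Theta).

Section LinearTensorMap.
Variables (C : numClosedFieldType) (n1 m1 n2 m2 : nat).
Variables (Phi : 'M[C]_n1 -> 'M[C]_m1) (Theta : 'M[C]_n2 -> 'M[C]_m2).
Hypotheses (linPhi : linear Phi) (linTheta : linear Theta).
HB.instance Definition _ := GRing.isLinear.Build C _ _ _ Phi linPhi.
HB.instance Definition _ := GRing.isLinear.Build C _ _ _ Theta linTheta.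

Lemma tensor_map_tens A B : tensor_map Phi Theta (A *t B) = Phi A *t Theta B.
Proof.
apply/matrixP => x y.
case: (mxtens_indexP x) => p c; case: (mxtens_indexP y) => q d.
rewrite tensor_mapE tensmxE (linear_mx_coef Phi) (linear_mx_coef Theta).
rewrite mulr_suml; apply: eq_bigr => i _; rewrite mulr_suml; apply: eq_bigr => j _.
rewrite mulr_sumr; apply: eq_bigr => k _; rewrite mulr_sumr; apply: eq_bigr => l _.
by rewrite tensmxE mulrACA.
Qed.

Lemma tensor_map_trace_preserving :
  trace_preserving Phi -> trace_preserving Theta ->
  trace_preserving (tensor_map Phi Theta).
Proof.
move=> trPhi trTheta.
apply: (eq_linear_tens (F := @mxtrace C _ \o tensor_map Phi Theta)) => i j k l /=.
by rewrite tensor_map_tens !mxtrace_tens trPhi trTheta.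
Qed.

End LinearTensorMap.

Section TensorMapComp.
Variables (C : numClosedFieldType) (n1 m1 p1 n2 m2 p2 : nat).
Variables (Phi : 'M[C]_m1 -> 'M[C]_p1) (Theta : 'M[C]_m2 -> 'M[C]_p2).
Variables (Phi' : 'M[C]_n1 -> 'M[C]_m1) (Theta' : 'M[C]_n2 -> 'M[C]_m2).
Hypotheses (linPhi : linear Phi) (linTheta : linear Theta).
Hypotheses (linPhi' : linear Phi') (linTheta' : linear Theta').
HB.instance Definition _ := GRing.isLinear.Build C _ _ _ Phi linPhi.
HB.instance Definition _ := GRing.isLinear.Build C _ _ _ Theta linTheta.
HB.instance Definition _ := GRing.isLinear.Build C _ _ _ Phi' linPhi'.
HB.instance Definition _ := GRing.isLinear.Build C _ _ _ Theta' linTheta'.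

Lemma tensor_map_comp X :
  tensor_map Phi Theta (tensor_map Phi' Theta' X) =
  tensor_map (Phi \o Phi') (Theta \o Theta') X.
Proof.
apply: (eq_linear_tens (F := tensor_map Phi Theta \o tensor_map Phi' Theta')).
by move=> i j k l /=; rewrite !tensor_map_tens //; apply: linearP.
Qed.

End TensorMapComp.

Section CompletePositivity.
Variable C : numClosedFieldType.

Lemma psdmx_mxsub m n (s : 'I_m -> 'I_n) (X : 'M[C]_n) :
  psdmx X -> psdmx (mxsub s s X).
Proof.
move=> psdX v; pose P : 'M[C]_(n, m) := colsub s 1%:M.
have realP : map_mx Num.conj P = P.
  by apply/matrixP => i j; rewrite !mxE rmorphMn rmorph1.
have -> : mxsub s s X = P^T *m X *m P.
  by rewrite trmx_mxsub trmx1 mul_rowsub_mx mul1mx mulmx_colsub mulmx1 mxsubcr.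
have -> : adjmx v *m (P^T *m X *m P) *m v = adjmx (P *m v) *m X *m (P *m v).
  by rewrite /adjmx map_mxM realP trmx_mul !mulmxA.
exact: psdX.
Qed.

Lemma completely_positive_comp n m p
    (Phi : 'M[C]_m -> 'M[C]_p) (Theta : 'M[C]_n -> 'M[C]_m) :
  linear Phi -> linear Theta ->
  completely_positive Phi -> completely_positive Theta ->
  completely_positive (Phi \o Theta).
Proof.
move=> linPhi linTheta cpPhi cpTheta k X psdX.
have -> : tensor_map id (Phi \o Theta) X = tensor_map id Phi (tensor_map id Theta X).
  exact: esym (tensor_map_comp (@id_linear C k) linPhi (@id_linear C k) linTheta X).
exact/cpPhi/cpTheta.
Qed.

Lemma completely_positive_tensor_idl n n2 m2 (Theta : 'M[C]_n2 -> 'M[C]_m2) :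
  linear Theta -> completely_positive Theta ->
  completely_positive (tensor_map (@id 'M[C]_n) Theta).
Proof.
move=> linTheta cpTheta k X psdX.
set assoc := @tens_assoc_ord k n m2; set unassoc := @tens_unassoc_ord k n n2.
have -> : tensor_map id (tensor_map id Theta) X =
          mxsub assoc assoc (tensor_map id Theta (mxsub unassoc unassoc X)).
  apply: (eq_linear_tens
    (G := mxsub assoc assoc \o tensor_map id Theta \o mxsub unassoc unassoc)).
  move=> a b x y /=.
  case: (mxtens_indexP x) => i c; case: (mxtens_indexP y) => j d.
  rewrite delta_mx_tens (tensor_map_tens (@id_linear _ _) (tensor_map_linear _ _)).
  rewrite mxsub_tens_unassoc !(tensor_map_tens (@id_linear _ _) linTheta).
  by rewrite mxsub_tens_assoc.
by apply: psdmx_mxsub; apply: cpTheta; apply: psdmx_mxsub.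
Qed.

Lemma completely_positive_tensor_idr n n1 m1 (Phi : 'M[C]_n1 -> 'M[C]_m1) :
  linear Phi -> completely_positive Phi ->
  completely_positive (tensor_map Phi (@id 'M[C]_n)).
Proof.
move=> linPhi cpPhi k X psdX.
set swap := @tens_swap_ord k m1 n; set unswap := @tens_unswap_ord k n n1.
have -> : tensor_map id (tensor_map Phi id) X =
          mxsub swap swap (tensor_map id Phi (mxsub unswap unswap X)).
  apply: (eq_linear_tens
    (G := mxsub swap swap \o tensor_map id Phi \o mxsub unswap unswap)).
  move=> a b x y /=.
  case: (mxtens_indexP x) => i c; case: (mxtens_indexP y) => j d.
  rewrite delta_mx_tens (tensor_map_tens (@id_linear _ _) (tensor_map_linear _ _)).
  rewrite (tensor_map_tens linPhi (@id_linear _ _)) mxsub_tens_unswap.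
  by rewrite (tensor_map_tens (@id_linear _ _) linPhi) mxsub_tens_swap.
by apply: psdmx_mxsub; apply: cpPhi; apply: psdmx_mxsub.
Qed.

Lemma completely_positive_tensor n1 m1 n2 m2
    (Phi : 'M[C]_n1 -> 'M[C]_m1) (Theta : 'M[C]_n2 -> 'M[C]_m2) :
  linear Phi -> linear Theta ->
  completely_positive Phi -> completely_positive Theta ->
  completely_positive (tensor_map Phi Theta).
Proof.
move=> linPhi linTheta cpPhi cpTheta k X.
have -> : tensor_map id (tensor_map Phi Theta) X =
          tensor_map id (tensor_map Phi id \o tensor_map id Theta) X.
  apply: eq_tensor_map => // Y.
  exact: esym (tensor_map_comp linPhi (@id_linear _ _) (@id_linear _ _) linTheta Y).
apply: completely_positive_comp.
- exact: tensor_map_linear.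
- exact: tensor_map_linear.
- exact: completely_positive_tensor_idr.
- exact: completely_positive_tensor_idl.
Qed.

End CompletePositivity.

Section Freeness.
Variable C : numClosedFieldType.

Lemma free_wrt_comp f n m p (D1 : 'M[C]_n -> 'M[C]_n) (D2 : 'M[C]_m -> 'M[C]_m)
    (D3 : 'M[C]_p -> 'M[C]_p) (Phi : 'M[C]_m -> 'M[C]_p) (Theta : 'M[C]_n -> 'M[C]_m) :
  free_wrt f D2 D3 Phi -> free_wrt f D1 D2 Theta -> free_wrt f D1 D3 (Phi \o Theta).
Proof.
case: f => /= freePhi freeTheta X /=.
- have /= -> := freePhi (Theta X); have /= -> := freeTheta X.
  by have /= <- := freePhi (Theta (D1 X)).
- by have /= -> := freeTheta X; apply: freePhi.
- by have /= -> := freePhi (Theta X); have /= -> := freeTheta X.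
Qed.

Section FreeTensor.
Variables (n1 m1 n2 m2 : nat).
Variables (Din1 : 'M[C]_n1 -> 'M[C]_n1) (Dout1 : 'M[C]_m1 -> 'M[C]_m1).
Variables (Din2 : 'M[C]_n2 -> 'M[C]_n2) (Dout2 : 'M[C]_m2 -> 'M[C]_m2).
Variables (Phi : 'M[C]_n1 -> 'M[C]_m1) (Theta : 'M[C]_n2 -> 'M[C]_m2).
Hypotheses (linDin1 : linear Din1) (linDout1 : linear Dout1).
Hypotheses (linDin2 : linear Din2) (linDout2 : linear Dout2).
Hypotheses (linPhi : linear Phi) (linTheta : linear Theta).
HB.instance Definition _ := GRing.isLinear.Build C _ _ _ Din1 linDin1.
HB.instance Definition _ := GRing.isLinear.Build C _ _ _ Dout1 linDout1.
HB.instance Definition _ := GRing.isLinear.Build C _ _ _ Din2 linDin2.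
HB.instance Definition _ := GRing.isLinear.Build C _ _ _ Dout2 linDout2.
HB.instance Definition _ := GRing.isLinear.Build C _ _ _ Phi linPhi.
HB.instance Definition _ := GRing.isLinear.Build C _ _ _ Theta linTheta.

Lemma free_wrt_tensor f :
  free_wrt f Din1 Dout1 Phi -> free_wrt f Din2 Dout2 Theta ->
  free_wrt f (tensor_map Din1 Din2) (tensor_map Dout1 Dout2) (tensor_map Phi Theta).
Proof.
have compE := tensor_map_comp (linearP _) (linearP _) (linearP _) (linearP _).
case: f => /= freePhi freeTheta X /=; rewrite !compE; exact: eq_tensor_map.
Qed.

End FreeTensor.
End Freeness.

Section QuantumOperations.
Variable C : numClosedFieldType.

Lemma dephase_linear n : linear (@dephase C n).
Proof.
move=> a X Y; apply/matrixP => i j; rewrite !mxE.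
by case: (i == j); rewrite ?mulr0 ?addr0.
Qed.

Lemma quantum_operation_comp n m p
    (Phi : 'M[C]_m -> 'M[C]_p) (Theta : 'M[C]_n -> 'M[C]_m) :
  quantum_operation Phi -> quantum_operation Theta ->
  quantum_operation (Phi \o Theta).
Proof.
case=> linPhi trPhi cpPhi [linTheta trTheta cpTheta]; split.
- by move=> a X Y /=; rewrite linTheta linPhi.
- by move=> X /=; rewrite trPhi trTheta.
- exact: completely_positive_comp.
Qed.

Lemma quantum_operation_tensor n1 m1 n2 m2
    (Phi : 'M[C]_n1 -> 'M[C]_m1) (Theta : 'M[C]_n2 -> 'M[C]_m2) :
  quantum_operation Phi -> quantum_operation Theta ->
  quantum_operation (tensor_map Phi Theta).
Proof.
case=> linPhi trPhi cpPhi [linTheta trTheta cpTheta]; split.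
- exact: tensor_map_linear.
- exact: tensor_map_trace_preserving.
- exact: completely_positive_tensor.
Qed.

End QuantumOperations.

Theorem lemma11 (C : numClosedFieldType) (f : free_kind) :
  (forall (n m p : nat) (Phi : 'M[C]_m -> 'M[C]_p) (Theta : 'M[C]_n -> 'M[C]_m),
      free_op f Phi -> free_op f Theta -> free_op f (Phi \o Theta)) /\
  (forall (n1 m1 n2 m2 : nat)
          (Phi : 'M[C]_n1 -> 'M[C]_m1) (Theta : 'M[C]_n2 -> 'M[C]_m2),
      free_op f Phi -> free_op f Theta ->
      quantum_operation (tensor_map Phi Theta) /\
      free_wrt f (@dephase2 C n1 n2) (@dephase2 C m1 m2) (tensor_map Phi Theta)).
Proof.
split=> [n m p | n1 m1 n2 m2] Phi Theta [qoPhi freePhi] [qoTheta freeTheta].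
  split; first exact: quantum_operation_comp.
  exact: free_wrt_comp freePhi freeTheta.
split; first exact: quantum_operation_tensor.
case: qoPhi qoTheta => [linPhi _ _] [linTheta _ _].
by apply: free_wrt_tensor => //; apply: dephase_linear.
Qed.
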